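(* Let $\tau>\tau_0>0$, $\gamma>0$, $\phi_0>0$ and $\varepsilon>0$. Let $\phi(t)\equiv\phi_0$ on $[-\tau,0]$, set $$A=\frac{\gamma(\phi_0+\varepsilon)}{1-e^{-\gamma(\tau-\tau_0)}},$$ and for $\delta>0$ let $f_\delta:\mathbb{R}\to\mathbb{R}$, $f_\delta(u)=A\,e^{-(u-\phi_0)^2/\delta}$. Let $u_\delta$ be the solution on $[-\tau,\infty)$ of $$u'(t)=-\gamma u(t)+f_\delta(u(t-\tau_0))-f_\delta(u(t-\tau))e^{-\gamma(\tau-\tau_0)}\ (t>0),\qquad u(t)=\phi(t)\ (-\tau\le t\le0).$$ Then $H_0(\phi):=\phi(0)-\int_{\tau_0}^{\tau}f_\delta(\phi(-a))e^{-\gamma(a-\tau_0)}da=-\varepsilon$ for every $\delta>0$, and there exists $\delta_0>0$ such that $u_\delta(\tau)<0$ for all $0<\delta<\delta_0$. *)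

From Stdlib Require Import Reals.
Open Scope R_scope.

Definition A_const (gamma tau tau0 phi0 eps : R) : R :=
  gamma * (phi0 + eps) / (1 - exp (- (gamma * (tau - tau0)))).

Definition f_delta (A phi0 delta : R) (u : R) : R :=
  A * exp (- ((u - phi0) ^ 2 / delta)).

Definition phi_const (phi0 : R) : R -> R := fun _ => phi0.

Definition is_solution (gamma tau tau0 : R) (f : R -> R) (phi : R -> R) (u : R -> R) : Prop :=
  (forall t, -tau <= t <= 0 -> u t = phi t) /\
  continuity_pt u 0 /\
  (forall t, 0 < t ->
     derivable_pt_lim u t
       (- gamma * u t + f (u (t - tau0)) - f (u (t - tau)) * exp (- (gamma * (tau - tau0))))).

From Stdlib Require Import Reals Lra Classical.
From Coquelicot Require Import Coquelicot.
Open Scope R_scope.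

(* Write E = e^{-gamma (tau - tau0)}, K = A E and L = tau - tau0.  The choice of A is
   exactly A (1 - E) = gamma (phi0 + eps); with the constant history this gives
   H0(phi) = phi0 - A (1 - E) / gamma = -eps for every delta (first half).

   For the second half, on (0, tau] the lag-tau argument only sees the history, so
   u' = -gamma u + f(u(t - tau0)) - K.  Every estimate is a comparison argument for this
   linear equation: if the forcing g = f(u(t - tau0)) - K is at most B, except on a
   window of length w where it is at most B + C, then
   u(b) <= B/gamma + (u(a) - B/gamma) e^{-gamma (b - a)} + C w   (comparison_upper).
   Since f <= A everywhere and f <= beta = A e^{-rho^2/delta} outside the band
   |v - phi0| <= rho, it suffices to show that u, on [eta, L], lies in the band during at
   most one window of length kappa: u is above the band on [eta, tau0 + eta], and once it
   falls into the band it leaves it downwards within kappa and never returns.  Then u(tau)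
   is the H0 value -eps e^{-gamma tau} up to errors beta / gamma + A (eta + kappa), which
   the choice of parameters makes small. *)

Lemma exp_le_mono (x y : R) : x <= y -> exp x <= exp y.
Proof. intros [H | ->]; [left; now apply exp_increasing | lra]. Qed.

Lemma exp_neg_lt_1 (x : R) : 0 < x -> exp (- x) < 1.
Proof. intros H. rewrite <- exp_0. apply exp_increasing. lra. Qed.

(* Rescaling identity used to undo the integrating factor e^{gamma t}. *)
Lemma exp_shift (g a b : R) : exp (g * b) * exp (- (g * (b - a))) = exp (g * a).
Proof. rewrite <- exp_plus. f_equal. ring. Qed.

Lemma exists_pos_small (c1 r1 c2 r2 : R) : 0 < c1 -> 0 < r1 -> 0 < c2 -> 0 < r2 ->
  exists x, 0 < x /\ c1 * x <= r1 /\ c2 * x <= r2.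
Proof.
intros Hc1 Hr1 Hc2 Hr2. exists (Rmin (r1 / c1) (r2 / c2)). split; [|split].
- apply Rmin_glb_lt; apply Rdiv_lt_0_compat; assumption.
- rewrite Rmult_comm. apply Rle_div_r; [lra|apply Rmin_l].
- rewrite Rmult_comm. apply Rle_div_r; [lra|apply Rmin_r].
Qed.

Lemma increment_le (h dh : R -> R) (a b C : R) : a <= b ->
  (forall x, a < x < b -> derivable_pt_lim h x (dh x)) ->
  (forall x, a <= x <= b -> continuity_pt h x) ->
  (forall x, a < x < b -> dh x <= C) -> h b - h a <= C * (b - a).
Proof.
intros Hab Hd Hc HC.
destruct (Req_dec a b) as [->|Hne]; [lra|].
set (df := fun x => if Rlt_dec a x then if Rlt_dec x b then dh x else C else C).
assert (Hdf : forall x, a < x < b -> df x = dh x).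
{ intros x Hx. unfold df. destruct (Rlt_dec a x); [|lra]. destruct (Rlt_dec x b); [easy|lra]. }
destruct (MVT_gen h a b df) as [c [Hc1 Hc2]];
  rewrite ?Rmin_left, ?Rmax_right in * by lra.
- intros x Hx. apply is_derive_Reals. rewrite Hdf by assumption. now apply Hd.
- exact Hc.
- rewrite Hc2. apply Rmult_le_compat_r; [lra|]. unfold df.
  destruct (Rlt_dec a c); [|lra]. destruct (Rlt_dec c b); [|lra]. apply HC; lra.
Qed.

Lemma increment_ge (h dh : R -> R) (a b C : R) : a <= b ->
  (forall x, a < x < b -> derivable_pt_lim h x (dh x)) ->
  (forall x, a <= x <= b -> continuity_pt h x) ->
  (forall x, a < x < b -> C <= dh x) -> C * (b - a) <= h b - h a.
Proof.
intros Hab Hd Hc HC.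
enough (- h b - - h a <= - C * (b - a)) by lra.
apply (increment_le (fun x => - h x) (fun x => - dh x)); [exact Hab| | |].
- intros x Hx. apply derivable_pt_lim_opp. now apply Hd.
- intros x Hx. apply continuity_pt_opp. now apply Hc.
- intros x Hx. specialize (HC x Hx). lra.
Qed.

Lemma increment_le_window (h dh : R -> R) (a b C1 C2 p w : R) :
  a <= b -> 0 <= w -> 0 <= C2 ->
  (forall x, a < x < b -> derivable_pt_lim h x (dh x)) ->
  (forall x, a <= x <= b -> continuity_pt h x) ->
  (forall x, a < x < b -> dh x <= C1 + C2) ->
  (forall x, a < x < b -> x < p \/ p + w < x -> dh x <= C1) ->
  h b - h a <= C1 * (b - a) + C2 * w.
Proof.
intros Hab Hw HC2 Hd Hc Hin Hout.
set (m1 := Rmin b (Rmax a p)). set (m2 := Rmax m1 (Rmin b (p + w))).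
assert (Hm1 : a <= m1 <= b /\ m1 <= Rmax a p)
  by (unfold m1, Rmin, Rmax; repeat destruct Rle_dec; lra).
assert (Hm2 : m1 <= m2 <= b /\ m2 - m1 <= w /\ (m2 < b -> p + w <= m2))
  by (unfold m2, m1, Rmin, Rmax; repeat destruct Rle_dec; lra).
assert (Before : h m1 - h a <= C1 * (m1 - a)).
{ apply (increment_le h dh); try lra; intros x Hx.
  - apply Hd; lra.
  - apply Hc; lra.
  - apply Hout; [lra|]. left. unfold m1, Rmin, Rmax in Hx; repeat destruct Rle_dec; lra. }
assert (Inside : h m2 - h m1 <= (C1 + C2) * (m2 - m1)).
{ apply (increment_le h dh); try lra; intros x Hx; [apply Hd|apply Hc|apply Hin]; lra. }
assert (After : h b - h m2 <= C1 * (b - m2)).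
{ apply (increment_le h dh); try lra; intros x Hx; [apply Hd; lra|apply Hc; lra|].
  apply Hout; [lra|]. right. lra. }
assert (C2 * (m2 - m1) <= C2 * w) by (apply Rmult_le_compat_l; lra).
lra.
Qed.

(* Comparison principle for u' = -gamma u + g on [a, b], through the weighted function
   Y = e^{gamma t} (u - B / gamma), whose derivative is e^{gamma t} (g - B). *)
Section LinearComparison.

Variables (gamma B : R) (u g : R -> R) (a b : R).
Hypothesis gamma_pos : 0 < gamma.
Hypothesis a_le_b : a <= b.
Hypothesis u_deriv : forall x, a < x < b -> derivable_pt_lim u x (- gamma * u x + g x).
Hypothesis u_cont : forall x, a <= x <= b -> continuity_pt u x.

Let Y (x : R) : R := exp (gamma * x) * (u x - B / gamma).

Lemma weighted_deriv (x : R) : a < x < b ->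
  derivable_pt_lim Y x (exp (gamma * x) * (g x - B)).
Proof.
intros Hx.
assert (He : derivable_pt_lim (fun x => exp (gamma * x)) x (exp (gamma * x) * gamma))
  by (apply is_derive_Reals; auto_derive; [easy|ring]).
assert (Hu : derivable_pt_lim (fun x => u x - B / gamma) x ((- gamma * u x + g x) - 0))
  by (apply (derivable_pt_lim_minus u (fun _ => B / gamma));
      [now apply u_deriv|apply derivable_pt_lim_const]).
replace (exp (gamma * x) * (g x - B)) with
  (exp (gamma * x) * gamma * (u x - B / gamma) + exp (gamma * x) * (- gamma * u x + g x - 0))
  by (field; lra).
exact (derivable_pt_lim_mult _ _ x _ _ He Hu).
Qed.

Lemma weighted_cont (x : R) : a <= x <= b -> continuity_pt Y x.
Proof.
intros Hx. apply (continuity_pt_mult (fun x => exp (gamma * x)) (fun x => u x - B / gamma)).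
- apply derivable_continuous_pt. exists (exp (gamma * x) * gamma).
  apply is_derive_Reals. auto_derive; [easy|ring].
- apply (continuity_pt_minus u (fun _ => B / gamma)); [now apply u_cont|].
  apply continuity_pt_const. now intros ? ?.
Qed.

Lemma comparison_upper (C p w : R) : 0 <= C -> 0 <= w ->
  (forall x, a < x < b -> g x <= B + C) ->
  (forall x, a < x < b -> x < p \/ p + w < x -> g x <= B) ->
  u b <= B / gamma + (u a - B / gamma) * exp (- (gamma * (b - a))) + C * w.
Proof.
intros HC Hw Hin Hout.
assert (Hinc : Y b - Y a <= 0 * (b - a) + exp (gamma * b) * C * w).
{ apply (increment_le_window Y (fun x => exp (gamma * x) * (g x - B)) a b 0
    (exp (gamma * b) * C) p w);
    [lra|lra|apply Rmult_le_pos; [left; apply exp_pos|lra]|exact weighted_deriv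
    |exact weighted_cont| |]; intros x Hx.
  - assert (exp (gamma * x) <= exp (gamma * b)) by (apply exp_le_mono; nra).
    assert (Hg := Hin x Hx). assert (Hp := exp_pos (gamma * x)). nra.
  - intros Hpw. assert (Hg := Hout x Hx Hpw). assert (Hp := exp_pos (gamma * x)). nra. }
apply (Rmult_le_reg_l (exp (gamma * b))); [apply exp_pos|].
assert (Hs := exp_shift gamma a b). unfold Y in Hinc.
replace (exp (gamma * b) * (B / gamma + (u a - B / gamma) * exp (- (gamma * (b - a))) + C * w))
  with (exp (gamma * b) * (B / gamma) + exp (gamma * a) * (u a - B / gamma)
        + exp (gamma * b) * C * w) by (rewrite <- Hs; ring).
lra.
Qed.

Lemma comparison_lower : (forall x, a < x < b -> B <= g x) ->
  B / gamma + (u a - B / gamma) * exp (- (gamma * (b - a))) <= u b.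
Proof.
intros Hlow.
assert (Hinc : 0 * (b - a) <= Y b - Y a).
{ apply (increment_ge Y (fun x => exp (gamma * x) * (g x - B)));
    [lra|exact weighted_deriv|exact weighted_cont|].
  intros x Hx. assert (Hg := Hlow x Hx). assert (Hp := exp_pos (gamma * x)). nra. }
apply (Rmult_le_reg_l (exp (gamma * b))); [apply exp_pos|].
assert (Hs := exp_shift gamma a b). unfold Y in Hinc.
replace (exp (gamma * b) * (B / gamma + (u a - B / gamma) * exp (- (gamma * (b - a)))))
  with (exp (gamma * b) * (B / gamma) + exp (gamma * a) * (u a - B / gamma))
  by (rewrite <- Hs; ring).
lra.
Qed.

End LinearComparison.

Lemma continuous_pos_nbhd (g : R -> R) (t : R) : continuity_pt g t -> 0 < g t ->
  exists d, 0 < d /\ forall x, Rabs (x - t) < d -> 0 < g x.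
Proof.
intros Hc Hpos.
destruct (Hc (g t / 2)) as [d [Hd Hnear]]; [lra|].
exists d. split; [exact Hd|]. intros x Hx.
destruct (Req_dec x t) as [->|Hne]; [lra|].
assert (Hgx : Rabs (g x - g t) < g t / 2) by (apply Hnear; repeat split; auto).
apply Rabs_def2 in Hgx. lra.
Qed.

Lemma first_time (g : R -> R) (a b : R) :
  (forall x, a <= x <= b -> continuity_pt g x) ->
  (exists x, a <= x <= b /\ g x <= 0) ->
  exists t, a <= t <= b /\ g t <= 0 /\ forall x, a <= x < t -> 0 < g x.
Proof.
intros Hc [x0 [Hx0 Hgx0]].
set (S := fun y => a <= - y <= b /\ g (- y) <= 0).
destruct (completeness S) as [m [Hub Hleast]].
{ exists (- a). intros y [Hy _]. lra. }
{ exists (- x0). split; rewrite Ropp_involutive; auto. }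
assert (Hm : a <= - m <= b).
{ split.
  - apply Ropp_le_cancel. rewrite Ropp_involutive. apply Hleast. intros y [Hy _]. lra.
  - assert (- x0 <= m) by (apply Hub; split; rewrite Ropp_involutive; auto). lra. }
assert (Hbefore : forall x, a <= x < - m -> 0 < g x).
{ intros x Hx. destruct (Rlt_le_dec 0 (g x)) as [|Hle]; [easy|].
  assert (- x <= m) by (apply Hub; split; rewrite Ropp_involutive; [lra|easy]). lra. }
exists (- m). split; [exact Hm|]. split; [|exact Hbefore].
destruct (Rle_lt_dec (g (- m)) 0) as [|Hpos]; [easy|]. exfalso.
destruct (continuous_pos_nbhd g (- m) (Hc (- m) Hm) Hpos) as [d [Hd Hg]].
assert (Hub' : is_upper_bound S (m - d / 2)).
{ intros y [Hy Hgy]. destruct (Rle_lt_dec y (m - d / 2)) as [|Hlt]; [easy|].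
  assert (y <= m) by (apply Hub; split; easy).
  assert (0 < g (- y)) by (apply Hg; apply Rabs_def1; lra). lra. }
assert (m <= m - d / 2) by (apply Hleast; exact Hub'). lra.
Qed.

Definition outside_band (c r v : R) : Prop := v < c - r \/ c + r < v.

Lemma f_delta_nonneg (A c delta v : R) : 0 <= A -> 0 <= f_delta A c delta v.
Proof. intros HA. unfold f_delta. apply Rmult_le_pos; [exact HA|left; apply exp_pos]. Qed.

Lemma f_delta_le (A c delta v : R) : 0 <= A -> 0 < delta -> f_delta A c delta v <= A.
Proof.
intros HA Hd. unfold f_delta. rewrite <- (Rmult_1_r A) at 2.
apply Rmult_le_compat_l; [exact HA|]. rewrite <- exp_0. apply exp_le_mono.
assert (0 <= (v - c) ^ 2 / delta) by (apply Rdiv_le_0_compat; [apply pow2_ge_0|lra]). lra.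
Qed.

Lemma f_delta_center (A c delta : R) : f_delta A c delta c = A.
Proof. unfold f_delta. replace (- ((c - c) ^ 2 / delta)) with 0 by (unfold Rdiv; ring). rewrite exp_0. ring. Qed.

Lemma f_delta_tail (A c delta r v : R) : 0 <= A -> 0 < delta -> 0 <= r ->
  outside_band c r v -> f_delta A c delta v <= A * exp (- (r ^ 2 / delta)).
Proof.
intros HA Hd Hr Hv. unfold f_delta. apply Rmult_le_compat_l; [exact HA|]. apply exp_le_mono.
apply Ropp_le_contravar. unfold Rdiv. apply Rmult_le_compat_r; [left; apply Rinv_0_lt_compat; lra|].
destruct Hv; nra.
Qed.

Lemma f_delta_tail_small (A r b : R) : 0 < A -> 0 < r -> 0 < b ->
  exists delta0, 0 < delta0 /\
    forall delta, 0 < delta < delta0 -> A * exp (- (r ^ 2 / delta)) < b.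
Proof.
intros HA Hr Hb. assert (Hr2 : 0 < r ^ 2) by (apply pow_lt; lra).
exists (b * r ^ 2 / A). split; [apply Rdiv_lt_0_compat; nra|].
intros delta [Hd Hd0].
set (q := r ^ 2 / delta).
assert (Hq : 0 < q) by (apply Rdiv_lt_0_compat; lra).
assert (Hqe : q < exp q) by (pose proof (exp_ineq1_le q); lra).
assert (HAq : A < b * q).
{ apply (Rmult_lt_reg_r delta); [lra|].
  replace (b * q * delta) with (b * r ^ 2) by (unfold q; field; lra).
  apply (Rmult_lt_compat_l A) in Hd0; [|lra].
  replace (A * (b * r ^ 2 / A)) with (b * r ^ 2) in Hd0 by (field; lra). lra. }
rewrite exp_Ropp. apply (Rmult_lt_reg_r (exp q)); [apply exp_pos|].
rewrite Rmult_assoc, Rinv_l by (apply Rgt_not_eq, exp_pos). nra.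
Qed.

Lemma is_RInt_exp_decay (g a b : R) : g <> 0 ->
  is_RInt (fun x => exp (- (g * (x - a)))) a b ((1 - exp (- (g * (b - a)))) / g).
Proof.
intros Hg.
set (F := fun x => - exp (- (g * (x - a))) / g).
replace ((1 - exp (- (g * (b - a)))) / g) with (minus (F b) (F a)).
- assert (HF : forall x : R, is_derive F x (exp (- (g * (x - a))))).
  { intros x. unfold F. auto_derive; [easy|]. replace (x + - a) with (x - a) by ring. field. exact Hg. }
  apply (@is_RInt_derive R_CompleteNormedModule F); intros x _; [apply HF|].
  apply (ex_derive_continuous (K := R_AbsRing) (V := R_NormedModule)). auto_derive. easy.
- unfold F, minus, plus, opp; simpl. rewrite Rminus_diag, Rmult_0_r, Ropp_0, exp_0.
  field. exact Hg.
Qed.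

Section DelayDynamics.

Variables tau tau0 gamma phi0 eps : R.
Hypothesis tau0_pos : 0 < tau0.
Hypothesis tau0_lt_tau : tau0 < tau.
Hypothesis gamma_pos : 0 < gamma.
Hypothesis phi0_pos : 0 < phi0.
Hypothesis eps_pos : 0 < eps.

(* A is the amplitude of the bump, K = A E the value of the lag-tau term on (0, tau], and
   e0 the decay factor over one delay tau0. *)
Let A := A_const gamma tau tau0 phi0 eps.
Let E := exp (- (gamma * (tau - tau0))).
Let K := A * E.
Let e0 := exp (- (gamma * tau0)).

Lemma E_bounds : 0 < E < 1.
Proof. split; [apply exp_pos|apply exp_neg_lt_1; nra]. Qed.

Lemma e0_bounds : 0 < e0 < 1.
Proof. split; [apply exp_pos|apply exp_neg_lt_1; nra]. Qed.

Lemma A_balance : A * (1 - E) = gamma * (phi0 + eps).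
Proof. pose proof E_bounds. unfold A, A_const. fold E. field. lra. Qed.

Lemma A_pos : 0 < A.
Proof. pose proof E_bounds. unfold A, A_const. fold E. apply Rdiv_lt_0_compat; nra. Qed.

(* First half: the history functional H0 equals -eps, since f_delta(phi0) = A. *)
Lemma H0_value (delta : R) :
  exists pr : Riemann_integrable
      (fun a => f_delta A phi0 delta (phi_const phi0 (- a)) * exp (- (gamma * (a - tau0))))
      tau0 tau,
    phi_const phi0 0 - RiemannInt pr = - eps.
Proof.
assert (HI : is_RInt
    (fun a => f_delta A phi0 delta (phi_const phi0 (- a)) * exp (- (gamma * (a - tau0))))
    tau0 tau (A * ((1 - E) / gamma))).
{ apply (is_RInt_ext (fun x => scal A (exp (- (gamma * (x - tau0)))))).
  - intros x _. unfold phi_const. now rewrite f_delta_center.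
  - exact (is_RInt_scal _ _ _ A _ (is_RInt_exp_decay gamma tau0 tau ltac:(lra))). }
exists (ex_RInt_Reals_0 _ _ _ (ex_intro _ _ HI)).
rewrite <- RInt_Reals, (is_RInt_unique _ _ _ _ HI).
unfold phi_const. replace (A * ((1 - E) / gamma)) with (A * (1 - E) / gamma) by (field; lra).
rewrite A_balance. field. lra.
Qed.

Section Solution.

Variables (f : R -> R) (rho beta : R) (u : R -> R).
Hypothesis f_nonneg : forall v, 0 <= f v.
Hypothesis f_le_A : forall v, f v <= A.
Hypothesis f_center : f phi0 = A.
Hypothesis f_tail : forall v, outside_band phi0 rho v -> f v <= beta.
Hypothesis rho_pos : 0 < rho.
Hypothesis u_solution : is_solution gamma tau tau0 f (phi_const phi0) u.

Lemma beta_nonneg : 0 <= beta.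
Proof.
apply (Rle_trans _ (f (phi0 - rho - 1))); [apply f_nonneg|]. apply f_tail. left. lra.
Qed.

(* On (0, tau] the lag-tau term reads the constant history, where f equals A. *)
Lemma u_deriv_reduced (t : R) : 0 < t <= tau ->
  derivable_pt_lim u t (- gamma * u t + (f (u (t - tau0)) - K)).
Proof.
intros Ht. destruct u_solution as [Hinit [_ Hder]].
replace (- gamma * u t + (f (u (t - tau0)) - K))
  with (- gamma * u t + f (u (t - tau0)) - f (u (t - tau)) * E).
- apply Hder. lra.
- rewrite (Hinit (t - tau)) by lra. unfold phi_const. rewrite f_center. unfold K. ring.
Qed.

Lemma u_cont (t : R) : 0 <= t -> continuity_pt u t.
Proof.
intros Ht. destruct u_solution as [_ [Hc0 Hder]].
destruct (Req_dec t 0) as [->|Hne]; [exact Hc0|].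
apply derivable_continuous_pt. econstructor. apply Hder. lra.
Qed.

Lemma u_comparison_upper (a b B C p w : R) : 0 <= a <= b -> b <= tau -> 0 <= C -> 0 <= w ->
  (forall x, a < x < b -> f (u (x - tau0)) - K <= B + C) ->
  (forall x, a < x < b -> x < p \/ p + w < x -> f (u (x - tau0)) - K <= B) ->
  u b <= B / gamma + (u a - B / gamma) * exp (- (gamma * (b - a))) + C * w.
Proof.
intros Hab Hb.
exact (comparison_upper gamma B u (fun x => f (u (x - tau0)) - K) a b gamma_pos ltac:(lra)
  (fun x Hx => u_deriv_reduced x ltac:(lra)) (fun x Hx => u_cont x ltac:(lra)) C p w).
Qed.

Lemma u_comparison_lower (a b B : R) : 0 <= a <= b -> b <= tau ->
  (forall x, a < x < b -> B <= f (u (x - tau0)) - K) ->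
  B / gamma + (u a - B / gamma) * exp (- (gamma * (b - a))) <= u b.
Proof.
intros Hab Hb.
exact (comparison_lower gamma B u (fun x => f (u (x - tau0)) - K) a b gamma_pos ltac:(lra)
  (fun x Hx => u_deriv_reduced x ltac:(lra)) (fun x Hx => u_cont x ltac:(lra))).
Qed.

(* On [0, tau0] the forcing is the constant gamma (phi0 + eps), so u is explicit. *)
Lemma u_first_delay (s : R) : 0 <= s <= tau0 ->
  u s = phi0 + eps - eps * exp (- (gamma * s)).
Proof.
intros Hs. destruct u_solution as [Hinit _].
assert (Hu0 : u 0 = phi0) by (apply Hinit; lra).
assert (Hforce : forall x, 0 < x < s -> f (u (x - tau0)) - K = gamma * (phi0 + eps)).
{ intros x Hx. rewrite Hinit by lra. unfold phi_const. rewrite f_center, <- A_balance.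
  unfold K. ring. }
assert (Hup := u_comparison_upper 0 s (gamma * (phi0 + eps)) 0 0 0 ltac:(lra) ltac:(lra)
  ltac:(lra) ltac:(lra) ltac:(intros x Hx; rewrite Hforce; lra)
  ltac:(intros x Hx _; rewrite Hforce; lra)).
assert (Hlow := u_comparison_lower 0 s (gamma * (phi0 + eps)) ltac:(lra) ltac:(lra)
  ltac:(intros x Hx; rewrite Hforce; lra)).
replace (gamma * (phi0 + eps) / gamma) with (phi0 + eps) in * by (field; lra).
rewrite Hu0, Rminus_0_r in *. lra.
Qed.

Lemma u_tau0 : u tau0 = phi0 + eps * (1 - e0).
Proof. rewrite u_first_delay by lra. unfold e0. ring. Qed.

(* u is above the band on [eta, tau0 + eta]: it rises on [0, tau0], and its decay
   rate after tau0 is at most gamma (phi0 + eps) + K. *)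
Lemma u_above_band_early (eta : R) : 0 < eta <= tau - tau0 ->
  rho < eps * (1 - exp (- (gamma * eta))) ->
  eta * (gamma * (phi0 + eps) + K) + rho < eps * (1 - e0) ->
  forall s, eta <= s <= tau0 + eta -> phi0 + rho < u s.
Proof.
intros Heta Hrho1 Hrho2 s Hs. pose proof e0_bounds. pose proof E_bounds. pose proof A_pos.
destruct (Rle_lt_dec s tau0) as [Hs0|Hs0].
- rewrite u_first_delay by lra.
  assert (exp (- (gamma * s)) <= exp (- (gamma * eta))) by (apply exp_le_mono; nra).
  nra.
- set (X := u tau0). set (d := s - tau0).
  assert (HX : X = phi0 + eps * (1 - e0)) by apply u_tau0.
  assert (HXpos : 0 < X <= phi0 + eps) by (rewrite HX; nra).
  assert (HK : 0 < K) by (unfold K; nra).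
  assert (Hk : 0 <= K / gamma) by (apply Rdiv_le_0_compat; lra).
  assert (Hlow := u_comparison_lower tau0 s (- K) ltac:(lra) ltac:(lra)
    ltac:(intros x Hx; pose proof (f_nonneg (u (x - tau0))); lra)).
  replace (- K / gamma) with (- (K / gamma)) in Hlow by (field; lra). fold X d in Hlow.
  assert (Hlin : 1 - gamma * d <= exp (- (gamma * d))) by (pose proof (exp_ineq1_le (- (gamma * d))); lra).
  assert (Hdecay : (X + K / gamma) * (1 - gamma * d) <= (X + K / gamma) * exp (- (gamma * d)))
    by (apply Rmult_le_compat_l; lra).
  assert (Hid : - (K / gamma) + (X + K / gamma) * (1 - gamma * d) = X - (gamma * X + K) * d)
    by (field; lra).
  assert (Hloss : (gamma * X + K) * d <= (gamma * (phi0 + eps) + K) * eta).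
  { apply Rmult_le_compat; unfold d; nra. }
  lra.
Qed.

(* If t2 <= t1 + tau0
   the delayed argument was above the band and u decays by the factor e^{-gamma kappa};
   otherwise it decays by e^{-gamma tau0}, up to the window of length kappa where the
   delayed argument may lie in the band. *)
Lemma decay_through_band (eta kappa t1 t2 : R) : 0 <= eta -> 0 < kappa -> beta <= K ->
  2 * rho < phi0 * (1 - exp (- (gamma * kappa))) ->
  2 * rho + A * kappa < phi0 * (1 - e0) ->
  tau0 + eta <= t1 -> t1 + kappa <= t2 <= tau - tau0 ->
  (forall s, eta <= s < t1 -> phi0 + rho < u s) -> u t1 <= phi0 + rho ->
  (forall s, t1 + kappa < s < t2 -> u s < phi0 - rho) ->
  u t2 < phi0 - rho.
Proof.
intros Heta Hkappa HbK Hshort Hlong Ht1 Ht2 Hbefore Hut1 Hbetween.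
pose proof beta_nonneg. pose proof e0_bounds. pose proof A_pos.
set (B := beta - K).
assert (Hc : B / gamma <= 0)
  by (assert (B / gamma * gamma = B) by (field; lra); unfold B in *; nra).
assert (Hout : forall x, t1 < x < t2 -> x < t1 + tau0 \/ t1 + tau0 + kappa < x ->
          f (u (x - tau0)) - K <= B).
{ intros x Hx Hw. unfold B. enough (f (u (x - tau0)) <= beta) by lra.
  apply f_tail. destruct Hw; [right; apply Hbefore; lra|left; apply Hbetween; lra]. }
assert (Hdecay : forall e, 0 < e -> (u t1 - B / gamma) * e <= (phi0 + rho - B / gamma) * e)
  by (intros e He; apply Rmult_le_compat_r; lra).
destruct (Rle_lt_dec t2 (t1 + tau0)) as [Hsh|Hlg].
- assert (Hup := u_comparison_upper t1 t2 B 0 t2 0 ltac:(lra) ltac:(lra) ltac:(lra) ltac:(lra)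
    ltac:(intros x Hx; rewrite Rplus_0_r; apply Hout; lra)
    ltac:(intros x Hx _; apply Hout; lra)).
  assert (He : exp (- (gamma * (t2 - t1))) <= exp (- (gamma * kappa))) by (apply exp_le_mono; nra).
  pose proof (Hdecay _ (exp_pos (- (gamma * (t2 - t1))))).
  assert ((phi0 + rho - B / gamma) * exp (- (gamma * (t2 - t1)))
          <= (phi0 + rho - B / gamma) * exp (- (gamma * kappa))) by (apply Rmult_le_compat_l; lra).
  assert (phi0 * (1 - exp (- (gamma * kappa)))
          <= (phi0 + rho - B / gamma) * (1 - exp (- (gamma * kappa))))
    by (apply Rmult_le_compat_r; [pose proof (exp_neg_lt_1 (gamma * kappa)); nra|lra]).
  lra.
- assert (Hup := u_comparison_upper t1 t2 B A (t1 + tau0) kappa ltac:(lra) ltac:(lra)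
    ltac:(lra) ltac:(lra)
    ltac:(intros x Hx; pose proof (f_le_A (u (x - tau0))); unfold B; lra) Hout).
  assert (He : exp (- (gamma * (t2 - t1))) <= e0) by (apply exp_le_mono; nra).
  pose proof (Hdecay _ (exp_pos (- (gamma * (t2 - t1))))).
  assert ((phi0 + rho - B / gamma) * exp (- (gamma * (t2 - t1)))
          <= (phi0 + rho - B / gamma) * e0) by (apply Rmult_le_compat_l; lra).
  assert (phi0 * (1 - e0) <= (phi0 + rho - B / gamma) * (1 - e0))
    by (apply Rmult_le_compat_r; lra).
  lra.
Qed.

Lemma stays_below_after_crossing (eta kappa t1 : R) : 0 <= eta -> 0 < kappa -> beta <= K ->
  2 * rho < phi0 * (1 - exp (- (gamma * kappa))) ->
  2 * rho + A * kappa < phi0 * (1 - e0) ->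
  tau0 + eta <= t1 ->
  (forall s, eta <= s < t1 -> phi0 + rho < u s) -> u t1 <= phi0 + rho ->
  forall s, t1 + kappa <= s <= tau - tau0 -> u s < phi0 - rho.
Proof.
intros Heta Hkappa HbK Hshort Hlong Ht1 Hbefore Hut1.
destruct (classic (exists s, t1 + kappa <= s <= tau - tau0 /\ phi0 - rho - u s <= 0))
  as [Hreturn|Hnever].
- exfalso.
  destruct (first_time (fun s => phi0 - rho - u s) (t1 + kappa) (tau - tau0))
    as [t2 [Ht2 [Hut2 Hbetween]]]; [|exact Hreturn|].
  + intros x Hx. apply (continuity_pt_minus (fun _ => phi0 - rho) u).
    * apply continuity_pt_const. now intros ? ?.
    * apply u_cont. lra.
  + assert (u t2 < phi0 - rho); [|simpl in Hut2; lra].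
    apply (decay_through_band eta kappa t1 t2); try easy.
    intros s Hs. specialize (Hbetween s ltac:(lra)). simpl in Hbetween. lra.
- intros s Hs. destruct (Rlt_le_dec (u s) (phi0 - rho)) as [|Hle]; [easy|].
  exfalso. apply Hnever. exists s. split; [exact Hs|lra].
Qed.

Lemma band_crossed_once (eta kappa : R) : 0 <= eta -> 0 < kappa -> beta <= K ->
  2 * rho < phi0 * (1 - exp (- (gamma * kappa))) ->
  2 * rho + A * kappa < phi0 * (1 - e0) ->
  (forall s, eta <= s <= tau0 + eta -> phi0 + rho < u s) ->
  exists p, forall s, eta <= s <= tau - tau0 -> s < p \/ p + kappa < s ->
    outside_band phi0 rho (u s).
Proof.
intros Heta Hkappa HbK Hshort Hlong Hearly.
destruct (classic (exists s, eta <= s <= tau - tau0 /\ u s - (phi0 + rho) <= 0))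
  as [Hcross|Hnever].
- destruct (first_time (fun s => u s - (phi0 + rho)) eta (tau - tau0))
    as [t1 [Ht1 [Hut1 Hbefore]]]; [|exact Hcross|].
  + intros x Hx. apply (continuity_pt_minus u (fun _ => phi0 + rho)).
    * apply u_cont. lra.
    * apply continuity_pt_const. now intros ? ?.
  + simpl in Hut1, Hbefore.
    assert (Hbefore' : forall s, eta <= s < t1 -> phi0 + rho < u s)
      by (intros s Hs; specialize (Hbefore s Hs); lra).
    assert (Hlate : tau0 + eta <= t1).
    { destruct (Rle_lt_dec (tau0 + eta) t1) as [|Hlt]; [easy|].
      specialize (Hearly t1 ltac:(lra)). lra. }
    exists t1. intros s Hs [Hlt|Hgt].
    * right. apply Hbefore'. lra.
    * left. apply (stays_below_after_crossing eta kappa t1); try easy; lra.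
- exists (tau - tau0). intros s Hs [Hlt|Hgt]; [|lra].
  right. destruct (Rlt_le_dec (phi0 + rho) (u s)) as [|Hle]; [easy|].
  exfalso. apply Hnever. exists s. split; [exact Hs|lra].
Qed.

(* Final comparison on [tau0, tau]: the delayed argument lies in the band only for
   s < eta and in one window of length kappa, and the main term is the H0 value. *)
Lemma u_tau_upper (eta kappa p : R) : 0 <= eta <= tau - tau0 -> 0 <= kappa ->
  (forall s, eta <= s <= tau - tau0 -> s < p \/ p + kappa < s -> outside_band phi0 rho (u s)) ->
  u tau <= beta * (1 - E) / gamma - eps * exp (- (gamma * tau)) + A * (eta + kappa).
Proof.
intros Heta Hkappa Hoff.
pose proof beta_nonneg. pose proof E_bounds. pose proof e0_bounds. pose proof A_pos.
set (B := beta - K). set (c := B / gamma). set (X := u tau0).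
assert (Hbump : forall x, f (u (x - tau0)) - K <= B + A)
  by (intros x; pose proof (f_le_A (u (x - tau0))); unfold B; lra).
assert (Hfirst : u (tau0 + eta) <= c + (X - c) * exp (- (gamma * eta)) + A * eta).
{ replace eta with (tau0 + eta - tau0) at 2 by ring.
  apply (u_comparison_upper tau0 (tau0 + eta) B A tau0 eta); try lra.
  - intros x Hx. apply Hbump.
  - intros x Hx Hw. lra. }
set (e2 := exp (- (gamma * (tau - (tau0 + eta))))).
assert (He2 : 0 < e2 <= 1) by (split; [apply exp_pos|rewrite <- exp_0; apply exp_le_mono; nra]).
assert (Hsecond : u tau <= c + (u (tau0 + eta) - c) * e2 + A * kappa).
{ apply (u_comparison_upper (tau0 + eta) tau B A (p + tau0) kappa); try lra.
  - intros x Hx. apply Hbump.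
  - intros x Hx Hw. unfold B. enough (f (u (x - tau0)) <= beta) by lra.
    apply f_tail, Hoff; lra. }
assert (Hprod : exp (- (gamma * eta)) * e2 = E)
  by (unfold e2, E; rewrite <- exp_plus; f_equal; ring).
assert (Hchain : (u (tau0 + eta) - c) * e2 <= ((X - c) * exp (- (gamma * eta)) + A * eta) * e2)
  by (apply Rmult_le_compat_r; lra).
assert (Hshrink : A * eta * e2 <= A * eta)
  by (rewrite <- (Rmult_1_r (A * eta)) at 2; apply Rmult_le_compat_l; nra).
assert (Hvalue : c + (X - c) * E = beta * (1 - E) / gamma - eps * exp (- (gamma * tau))).
{ assert (HK : K * (1 - E) = E * (gamma * (phi0 + eps))) by (unfold K; rewrite <- A_balance; ring).
  assert (He : exp (- (gamma * tau)) = e0 * E)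
    by (unfold e0, E; rewrite <- exp_plus; f_equal; ring).
  unfold X, c, B. rewrite u_tau0, He.
  replace ((beta - K) / gamma + (phi0 + eps * (1 - e0) - (beta - K) / gamma) * E)
    with (beta * (1 - E) / gamma - K * (1 - E) / gamma + (phi0 + eps * (1 - e0)) * E)
    by (field; lra).
  rewrite HK. field. lra. }
replace (((X - c) * exp (- (gamma * eta)) + A * eta) * e2)
  with ((X - c) * E + A * eta * e2) in Hchain by (rewrite <- Hprod; ring).
lra.
Qed.

End Solution.

Lemma admissible_parameters : exists eta kappa rho b,
  0 < eta <= tau - tau0 /\ 0 < kappa /\ 0 < rho /\ 0 < b <= K /\
  rho < eps * (1 - exp (- (gamma * eta))) /\
  eta * (gamma * (phi0 + eps) + K) + rho < eps * (1 - e0) /\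
  2 * rho < phi0 * (1 - exp (- (gamma * kappa))) /\
  2 * rho + A * kappa < phi0 * (1 - e0) /\
  b * (1 - E) / gamma + A * (eta + kappa) < eps * exp (- (gamma * tau)).
Proof.
pose proof A_pos. pose proof E_bounds. pose proof e0_bounds.
assert (HK : 0 < K) by (unfold K; nra).
set (M := eps * exp (- (gamma * tau))).
assert (HM : 0 < M) by (unfold M; pose proof (exp_pos (- (gamma * tau))); nra).
set (D := gamma * (phi0 + eps) + K).
assert (HD : 0 < D) by (unfold D; nra).
destruct (exists_pos_small A (M / 4) D (eps * (1 - e0) / 4)) as (y & Hy & HyA & HyD);
  try lra; try nra.
destruct (exists_pos_small 1 (tau - tau0) 1 y) as (eta & Heta & HetaL & Hetay); try lra.
destruct (exists_pos_small A (M / 4) A (phi0 * (1 - e0) / 4)) as (kappa & Hk & HkM & Hkphi);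
  try lra; try nra.
assert (Heh := exp_neg_lt_1 (gamma * eta) ltac:(nra)).
assert (Hek := exp_neg_lt_1 (gamma * kappa) ltac:(nra)).
destruct (exists_pos_small 1 (eps * (1 - exp (- (gamma * eta))) / 2)
                           1 (phi0 * (1 - exp (- (gamma * kappa))) / 4)) as (r1 & Hr1 & Hr1a & Hr1b);
  try lra; try nra.
destruct (exists_pos_small 1 (phi0 * (1 - e0) / 8) 1 (eps * (1 - e0) / 8)) as (r2 & Hr2 & Hr2a & Hr2b);
  try lra; try nra.
destruct (exists_pos_small 1 r1 1 r2) as (rho & Hrho & Hrho1 & Hrho2); try lra.
destruct (exists_pos_small 1 K 1 (gamma * M / 4)) as (b & Hb & HbK & HbM); try lra; try nra.
assert (Hbg : b * (1 - E) / gamma <= M / 4).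
{ apply (Rmult_le_reg_r gamma); [lra|].
  replace (b * (1 - E) / gamma * gamma) with (b * (1 - E)) by (field; lra). nra. }
exists eta, kappa, rho, b. repeat split; try lra; nra.
Qed.

Lemma eventual_negativity : exists delta0, 0 < delta0 /\
  forall delta, 0 < delta < delta0 ->
  forall u, is_solution gamma tau tau0 (f_delta A phi0 delta) (phi_const phi0) u -> u tau < 0.
Proof.
destruct admissible_parameters
  as (eta & kappa & rho & b & Heta & Hkappa & Hrho & Hb & Hrho_early & Hearly & Hshort & Hlong & Hfinal).
destruct (f_delta_tail_small A rho b A_pos Hrho (proj1 Hb)) as (delta0 & Hdelta0 & Htail).
exists delta0. split; [exact Hdelta0|]. intros delta Hdelta u Hsol.
pose proof A_pos. pose proof E_bounds.
set (f := f_delta A phi0 delta). set (beta := A * exp (- (rho ^ 2 / delta))).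
assert (Hbeta : beta < b) by (apply Htail; exact Hdelta).
assert (Hf0 : forall v, 0 <= f v) by (intros v; apply f_delta_nonneg; lra).
assert (HfA : forall v, f v <= A) by (intros v; apply f_delta_le; lra).
assert (Hfc : f phi0 = A) by apply f_delta_center.
assert (Hft : forall v, outside_band phi0 rho v -> f v <= beta)
  by (intros v Hv; apply f_delta_tail; [lra|lra|lra|exact Hv]).
assert (Habove := u_above_band_early f rho u Hf0 Hfc Hsol eta Heta Hrho_early Hearly).
destruct (band_crossed_once f rho beta u Hf0 HfA Hfc Hft Hrho Hsol eta kappa
            ltac:(lra) Hkappa ltac:(lra) Hshort Hlong Habove) as [p Hp].
assert (Hup := u_tau_upper f rho beta u Hf0 HfA Hfc Hft Hsol eta kappa p ltac:(lra) ltac:(lra) Hp).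
assert (beta * (1 - E) / gamma < b * (1 - E) / gamma)
  by (apply Rmult_lt_compat_r; [apply Rinv_0_lt_compat; lra|nra]).
lra.
Qed.

End DelayDynamics.

Theorem proposition1 (tau tau0 gamma phi0 eps : R)
  (htau0 : 0 < tau0) (htau : tau0 < tau) (hgamma : 0 < gamma)
  (hphi0 : 0 < phi0) (heps : 0 < eps) :
  (forall delta : R, 0 < delta ->
     exists pr : Riemann_integrable
         (fun a => f_delta (A_const gamma tau tau0 phi0 eps) phi0 delta (phi_const phi0 (- a))
                   * exp (- (gamma * (a - tau0)))) tau0 tau,
       phi_const phi0 0 - RiemannInt pr = - eps) /\
  (exists delta0 : R, 0 < delta0 /\
     forall delta : R, 0 < delta < delta0 ->
     forall u : R -> R,
       is_solution gamma tau tau0 (f_delta (A_const gamma tau tau0 phi0 eps) phi0 delta)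
         (phi_const phi0) u ->
       u tau < 0).
Proof.
split.
- intros delta _. now apply H0_value.
- now apply eventual_negativity.
Qed.
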